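(* Let $g,h:\mathbb{R}\to\mathbb{R}^2$ be free maps, i.e. $g'(t),g''(t)$ are linearly independent for all $t$, and likewise for $h$. Define $F_{gh}:\mathbb{R}^2\to\mathbb{R}^4$ by $F_{gh}(x,y)=(g(x),h(y))$. Then $F_{gh}\in\mathcal{A}_{2,4}$; moreover, for $F_{gh}$ the compatibility condition of the linearized system reduces to $\partial_x h_y+\partial_y h_x=\delta g_{xy}$. In particular $F(x,y)=(x,e^x,y,e^y)$ belongs to $\mathcal{A}_{2,4}$.
   Context: Definition of $\mathcal{A}_{m,q}$ for $q=\frac{m(m+3)}{2}-1$ (here $m=2,q=4$): it is the set of smooth $f:\mathbb{R}^m\to\mathbb{R}^q$ such that (i) at every point $x$ the $\frac{m(m+3)}{2}$ vectors $\partial_\alpha f(x)$, $\partial_{\alpha\beta}f(x)$ ($\alpha\le\beta$) span $\mathbb{R}^q$ (so one may choose smooth, nowhere simultaneously vanishing functions $\lambda^\alpha$, $\lambda^{\alpha\beta}=\lambda^{\beta\alpha}$ with $\sum_\alpha\lambda^\alpha\partial_\alpha f+\sum_{\alpha,\beta}\lambda^{\alpha\beta}\partial_{\alpha\beta}f\equiv0$, unique up to a nowhere-zero factor); and (ii) there is an index $\alpha_0$ such that at every point $\lambda^{\alpha_0 1},\dots,\lambda^{\alpha_0 m}$ are not all zero. The compatibility condition of the system $\sum_i \partial_\alpha f^i\delta f^i=h_\alpha$, $\sum_i \partial_{\alpha\beta} f^i\delta f^i=\tfrac12(\partial_\alpha h_\beta+\partial_\beta h_\alpha-\delta g_{\alpha\beta})$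 is $2\sum_\alpha\lambda^\alpha h_\alpha+\sum_{\alpha,\beta}\lambda^{\alpha\beta}(\partial_\alpha h_\beta+\partial_\beta h_\alpha-\delta g_{\alpha\beta})=0$. *)

From Stdlib Require Import Reals.
Open Scope R_scope.

Definition is_deriv (f f' : R -> R) : Prop :=
  forall x, derivable_pt_lim f x (f' x).

Definition smooth1 (f : R -> R) : Prop :=
  exists D : nat -> R -> R, D 0%nat = f /\ forall n, is_deriv (D n) (D (S n)).

Definition lin_indep2 (u1 u2 v1 v2 : R) : Prop :=
  forall a b, a * u1 + b * v1 = 0 -> a * u2 + b * v2 = 0 -> a = 0 /\ b = 0.

Definition free_map (g1 g2 : R -> R) : Prop :=
  forall g1' g2' g1'' g2'' : R -> R,
    is_deriv g1 g1' -> is_deriv g1' g1'' ->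
    is_deriv g2 g2' -> is_deriv g2' g2'' ->
    forall t, lin_indep2 (g1' t) (g2' t) (g1'' t) (g2'' t).

Definition cont2 (u : R -> R -> R) : Prop :=
  forall x y eps, 0 < eps -> exists del, 0 < del /\
    forall x' y', Rabs (x' - x) < del -> Rabs (y' - y) < del ->
      Rabs (u x' y' - u x y) < eps.

(** D i j = d^i/dx^i d^j/dy^j of D 0 0: a family of all partial derivatives,
    each jointly continuous. *)
Definition smooth_family (D : nat -> nat -> R -> R -> R) : Prop :=
  forall i j,
    cont2 (D i j) /\
    forall x y,
      derivable_pt_lim (fun t => D i j t y) x (D (S i) j x y) /\
      derivable_pt_lim (fun t => D i j x t) y (D i (S j) x y).

Definition smooth2 (u : R -> R -> R) : Prop :=
  exists D, D 0%nat 0%nat = u /\ smooth_family D.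

(** Vectors of R^4 are [nat -> R] restricted to indices 0..3.
    Given partial-derivative families D k of the components f^k, the linear relation
    l1 f_x + l2 f_y + sum_{a,b} l^{ab} f_{ab} = 0 at (x,y), with l^{12} = l^{21} = l12. *)
Definition rel24 (D : nat -> nat -> nat -> R -> R -> R) (x y l1 l2 l11 l12 l22 : R)
  : Prop :=
  forall k, (k < 4)%nat ->
    l1 * D k 1%nat 0%nat x y + l2 * D k 0%nat 1%nat x y
    + l11 * D k 2%nat 0%nat x y + 2 * l12 * D k 1%nat 1%nat x y
    + l22 * D k 0%nat 2%nat x y = 0.

Definition nonzero5 (a b c d e : R) : Prop :=
  ~ (a = 0 /\ b = 0 /\ c = 0 /\ d = 0 /\ e = 0).

Definition A24 (f : nat -> R -> R -> R) : Prop :=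
  exists D : nat -> nat -> nat -> R -> R -> R,
    (forall k, (k < 4)%nat -> D k 0%nat 0%nat = f k /\ smooth_family (D k)) /\
    (forall x y (v : nat -> R), exists c1 c2 c3 c4 c5,
       forall k, (k < 4)%nat ->
         v k = c1 * D k 1%nat 0%nat x y + c2 * D k 0%nat 1%nat x y
             + c3 * D k 2%nat 0%nat x y + c4 * D k 1%nat 1%nat x y
             + c5 * D k 0%nat 2%nat x y) /\
    (* (ii) exists alpha0 in {1,2} with (l^{alpha0 1}, l^{alpha0 2}) never both zero *)
    ((forall x y l1 l2 l11 l12 l22, rel24 D x y l1 l2 l11 l12 l22 ->
        nonzero5 l1 l2 l11 l12 l22 -> l11 <> 0 \/ l12 <> 0) \/
     (forall x y l1 l2 l11 l12 l22, rel24 D x y l1 l2 l11 l12 l22 ->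
        nonzero5 l1 l2 l11 l12 l22 -> l12 <> 0 \/ l22 <> 0)).

Definition Fgh (g1 g2 h1 h2 : R -> R) : nat -> R -> R -> R :=
  fun k x y => match k with
               | 0%nat => g1 x | 1%nat => g2 x | 2%nat => h1 y | _ => h2 y end.

(** Compatibility expression
    2 sum_a l^a h_a + sum_{a,b} l^{ab} (d_a h_b + d_b h_a - dg_{ab})
    (with l^{12}=l^{21}, dg_{12}=dg_{21}), evaluated at a point. *)
Definition compat (l1 l2 l11 l12 l22 hx hy dxhx dxhy dyhx dyhy dgxx dgxy dgyy : R) : R :=
  2 * (l1 * hx + l2 * hy)
  + l11 * (dxhx + dxhx - dgxx)
  + l12 * (dxhy + dyhx - dgxy) + l12 * (dyhx + dxhy - dgxy)
  + l22 * (dyhy + dyhy - dgyy).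

From Stdlib Require Import Reals Lra Lia FunctionalExtensionality.
Open Scope R_scope.

(* The components of F_gh = (g1, g2, h1, h2) depend on one variable
   only, so any family of partial derivatives of F_gh is forced: f_x = (g', 0),
   f_y = (0, h'), f_xx = (g'', 0), f_xy = 0, f_yy = (0, h'').  Since g', g'' and
   h', h'' are bases of R^2, these five vectors span R^4, and any relation
   l1 f_x + l2 f_y + l11 f_xx + 2 l12 f_xy + l22 f_yy = 0 has l1 = l2 = l11 = l22 = 0;
   a nontrivial relation therefore has l12 <> 0, which is condition (ii) with
   alpha0 = 1, and the compatibility expression collapses to
   2 l12 (d_x h_y + d_y h_x - dg_xy). *)

Definition deriv_chain (G : nat -> R -> R) : Prop :=
  forall n, is_deriv (G n) (G (S n)).

Lemma is_deriv_unique (f f1 f2 : R -> R) :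
  is_deriv f f1 -> is_deriv f f2 -> f1 = f2.
Proof.
intros H1 H2. extensionality x. exact (uniqueness_limite f x _ _ (H1 x) (H2 x)).
Qed.

(* Constant functions have derivative 0 (stated for [fun _ => c], not [fct_cte c]). *)
Lemma deriv_const (c x : R) : derivable_pt_lim (fun _ => c) x 0.
Proof. apply derivable_pt_lim_const. Qed.

Lemma is_deriv_continuous (f f' : R -> R) : is_deriv f f' ->
  forall x eps, 0 < eps -> exists del, 0 < del /\
    forall x', Rabs (x' - x) < del -> Rabs (f x' - f x) < eps.
Proof.
intros Hf x eps Heps.
assert (Hc : continuity_pt f x)
  by (apply derivable_continuous_pt; exact (exist _ (f' x) (Hf x))).
destruct (Hc eps Heps) as [del [Hdel Hball]].
exists del; split; [exact Hdel|]. intros x' Hx'.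
destruct (Req_dec x' x) as [->|Hne].
- rewrite Rminus_diag, Rabs_R0; exact Heps.
- apply Hball. split; [split; [exact I | auto] | exact Hx'].
Qed.

Definition x_family (u : nat -> R -> R) : nat -> nat -> R -> R -> R :=
  fun i j x _ => match j with O => u i x | S _ => 0 end.

Definition y_family (u : nat -> R -> R) : nat -> nat -> R -> R -> R :=
  fun i j _ y => match i with O => u j y | S _ => 0 end.

Lemma cont2_zero : cont2 (fun _ _ => 0).
Proof.
intros x y eps Heps. exists 1; split; [lra|].
intros; rewrite Rminus_diag, Rabs_R0; exact Heps.
Qed.

Lemma x_family_smooth (u : nat -> R -> R) :
  deriv_chain u -> smooth_family (x_family u).
Proof.
intros Hu i j; split.
- destruct j as [|j]; [|exact cont2_zero].
  intros x y eps Heps.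
  destruct (is_deriv_continuous _ _ (Hu i) x eps Heps) as [del [Hdel Hball]].
  exists del; split; [exact Hdel|]. intros x' y' Hx' _. exact (Hball x' Hx').
- intros x y; destruct j; split; simpl; apply Hu || apply deriv_const.
Qed.

Lemma y_family_smooth (u : nat -> R -> R) :
  deriv_chain u -> smooth_family (y_family u).
Proof.
intros Hu i j; split.
- destruct i as [|i]; [|exact cont2_zero].
  intros x y eps Heps.
  destruct (is_deriv_continuous _ _ (Hu j) y eps Heps) as [del [Hdel Hball]].
  exists del; split; [exact Hdel|]. intros x' y' _ Hy'. exact (Hball y' Hy').
- intros x y; destruct i; split; simpl; apply Hu || apply deriv_const.
Qed.

Lemma first_partials_x (E : nat -> nat -> R -> R -> R) i j (u u' : R -> R) :
  smooth_family E -> E i j = (fun x _ => u x) -> is_deriv u u' ->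
  forall x y, E (S i) j x y = u' x /\ E i (S j) x y = 0.
Proof.
intros HE Hij Hu x y. destruct (proj2 (HE i j) x y) as [Dx Dy].
rewrite Hij in Dx, Dy. split.
- exact (uniqueness_limite _ _ _ _ Dx (Hu x)).
- exact (uniqueness_limite _ _ _ _ Dy (deriv_const _ y)).
Qed.

Lemma first_partials_y (E : nat -> nat -> R -> R -> R) i j (u u' : R -> R) :
  smooth_family E -> E i j = (fun _ y => u y) -> is_deriv u u' ->
  forall x y, E (S i) j x y = 0 /\ E i (S j) x y = u' y.
Proof.
intros HE Hij Hu x y. destruct (proj2 (HE i j) x y) as [Dx Dy].
rewrite Hij in Dx, Dy. split.
- exact (uniqueness_limite _ _ _ _ Dx (deriv_const _ x)).
- exact (uniqueness_limite _ _ _ _ Dy (Hu y)).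
Qed.

Lemma partials_x_only (E : nat -> nat -> R -> R -> R) (u u' u'' : R -> R) :
  smooth_family E -> E 0%nat 0%nat = (fun x _ => u x) ->
  is_deriv u u' -> is_deriv u' u'' ->
  forall x y, E 1%nat 0%nat x y = u' x /\ E 0%nat 1%nat x y = 0 /\
    E 2%nat 0%nat x y = u'' x /\ E 1%nat 1%nat x y = 0 /\ E 0%nat 2%nat x y = 0.
Proof.
intros HE H00 Hu Hu' x y.
pose proof (first_partials_x _ _ _ _ _ HE H00 Hu) as P00.
assert (H10 : E 1%nat 0%nat = fun x _ => u' x)
  by (extensionality s; extensionality t; apply P00).
assert (H01 : E 0%nat 1%nat = fun _ _ => 0)
  by (extensionality s; extensionality t; apply P00).
pose proof (first_partials_x _ _ _ _ _ HE H10 Hu' x y) as [P20 P11].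
pose proof (first_partials_x _ _ _ (fun _ => 0) _ HE H01 (deriv_const 0) x y)
  as [_ P02].
repeat split; try apply P00; assumption.
Qed.

Lemma partials_y_only (E : nat -> nat -> R -> R -> R) (u u' u'' : R -> R) :
  smooth_family E -> E 0%nat 0%nat = (fun _ y => u y) ->
  is_deriv u u' -> is_deriv u' u'' ->
  forall x y, E 1%nat 0%nat x y = 0 /\ E 0%nat 1%nat x y = u' y /\
    E 2%nat 0%nat x y = 0 /\ E 1%nat 1%nat x y = 0 /\ E 0%nat 2%nat x y = u'' y.
Proof.
intros HE H00 Hu Hu' x y.
pose proof (first_partials_y _ _ _ _ _ HE H00 Hu) as P00.
assert (H10 : E 1%nat 0%nat = fun _ _ => 0)
  by (extensionality s; extensionality t; apply P00).
assert (H01 : E 0%nat 1%nat = fun _ y => u' y)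
  by (extensionality s; extensionality t; apply P00).
pose proof (first_partials_y _ _ _ (fun _ => 0) _ HE H10 (deriv_const 0) x y)
  as [P20 _].
pose proof (first_partials_y _ _ _ _ _ HE H01 Hu' x y) as [P11 P02].
repeat split; try apply P00; assumption.
Qed.

Lemma lin_indep2_det (u1 u2 v1 v2 : R) :
  lin_indep2 u1 u2 v1 v2 -> u1 * v2 - u2 * v1 <> 0.
Proof.
intros Hind Hdet.
destruct (Req_dec u1 0) as [Hu|Hu]; destruct (Req_dec v1 0) as [Hv|Hv].
- (* first coordinates vanish: v2 (u) - u2 (v) = 0 forces u2 = 0, then u = 0 *)
  destruct (Hind v2 (- u2)) as [_ Hu2]; [subst; ring | lra |].
  destruct (Hind 1 0) as [H10 _]; [subst; ring | subst; lra | lra].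
- destruct (Hind v1 (- u1)); [ring | lra | lra].
- destruct (Hind v1 (- u1)); [ring | lra | lra].
- destruct (Hind v1 (- u1)); [ring | lra | lra].
Qed.

(* Two independent vectors of R^2 span R^2 (Cramer's rule). *)
Lemma lin_indep2_spans (u1 u2 v1 v2 : R) :
  lin_indep2 u1 u2 v1 v2 ->
  forall w1 w2, exists a b, w1 = a * u1 + b * v1 /\ w2 = a * u2 + b * v2.
Proof.
intros Hind w1 w2. pose proof (lin_indep2_det _ _ _ _ Hind) as Hdet.
exists ((w1 * v2 - w2 * v1) / (u1 * v2 - u2 * v1)),
       ((u1 * w2 - u2 * w1) / (u1 * v2 - u2 * v1)).
split; field; exact Hdet.
Qed.

Definition free_chain (G1 G2 : nat -> R -> R) : Prop :=
  forall t, lin_indep2 (G1 1%nat t) (G2 1%nat t) (G1 2%nat t) (G2 2%nat t).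

Lemma free_map_chain (G1 G2 : nat -> R -> R) :
  deriv_chain G1 -> deriv_chain G2 -> free_map (G1 0%nat) (G2 0%nat) -> free_chain G1 G2.
Proof. intros HG1 HG2 Hfree. exact (Hfree _ _ _ _ (HG1 0%nat) (HG1 1%nat) (HG2 0%nat) (HG2 1%nat)). Qed.

Section FghJet.

Context {G1 G2 H1 H2 : nat -> R -> R}.
Hypotheses (HG1 : deriv_chain G1) (HG2 : deriv_chain G2)
           (HH1 : deriv_chain H1) (HH2 : deriv_chain H2).
Hypotheses (g_free : free_chain G1 G2) (h_free : free_chain H1 H2).

Context {D : nat -> nat -> nat -> R -> R -> R}.
Hypothesis HD : forall k, (k < 4)%nat ->
  D k 0%nat 0%nat = Fgh (G1 0%nat) (G2 0%nat) (H1 0%nat) (H2 0%nat) k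
  /\ smooth_family (D k).

Lemma Fgh_partials (x y : R) :
  (D 0%nat 1%nat 0%nat x y = G1 1%nat x /\ D 0%nat 0%nat 1%nat x y = 0 /\
   D 0%nat 2%nat 0%nat x y = G1 2%nat x /\ D 0%nat 1%nat 1%nat x y = 0 /\
   D 0%nat 0%nat 2%nat x y = 0) /\
  (D 1%nat 1%nat 0%nat x y = G2 1%nat x /\ D 1%nat 0%nat 1%nat x y = 0 /\
   D 1%nat 2%nat 0%nat x y = G2 2%nat x /\ D 1%nat 1%nat 1%nat x y = 0 /\
   D 1%nat 0%nat 2%nat x y = 0) /\
  (D 2%nat 1%nat 0%nat x y = 0 /\ D 2%nat 0%nat 1%nat x y = H1 1%nat y /\
   D 2%nat 2%nat 0%nat x y = 0 /\ D 2%nat 1%nat 1%nat x y = 0 /\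
   D 2%nat 0%nat 2%nat x y = H1 2%nat y) /\
  (D 3%nat 1%nat 0%nat x y = 0 /\ D 3%nat 0%nat 1%nat x y = H2 1%nat y /\
   D 3%nat 2%nat 0%nat x y = 0 /\ D 3%nat 1%nat 1%nat x y = 0 /\
   D 3%nat 0%nat 2%nat x y = H2 2%nat y).
Proof.
destruct (HD 0%nat ltac:(lia)) as [E0 S0]; destruct (HD 1%nat ltac:(lia)) as [E1 S1].
destruct (HD 2%nat ltac:(lia)) as [E2 S2]; destruct (HD 3%nat ltac:(lia)) as [E3 S3].
split; [|split; [|split]].
- exact (partials_x_only _ _ _ _ S0 E0 (HG1 0%nat) (HG1 1%nat) x y).
- exact (partials_x_only _ _ _ _ S1 E1 (HG2 0%nat) (HG2 1%nat) x y).
- exact (partials_y_only _ _ _ _ S2 E2 (HH1 0%nat) (HH1 1%nat) x y).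
- exact (partials_y_only _ _ _ _ S3 E3 (HH2 0%nat) (HH2 1%nat) x y).
Qed.

Lemma Fgh_spans (x y : R) (v : nat -> R) :
  exists c1 c2 c3 c4 c5, forall k, (k < 4)%nat ->
    v k = c1 * D k 1%nat 0%nat x y + c2 * D k 0%nat 1%nat x y
        + c3 * D k 2%nat 0%nat x y + c4 * D k 1%nat 1%nat x y
        + c5 * D k 0%nat 2%nat x y.
Proof.
destruct (Fgh_partials x y) as [(p1&p2&p3&p4&p5) [(q1&q2&q3&q4&q5)
  [(r1&r2&r3&r4&r5) (s1&s2&s3&s4&s5)]]].
destruct (lin_indep2_spans _ _ _ _ (g_free x) (v 0%nat) (v 1%nat)) as [a [b [Hv0 Hv1]]].
destruct (lin_indep2_spans _ _ _ _ (h_free y) (v 2%nat) (v 3%nat)) as [c [d [Hv2 Hv3]]].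
exists a, c, b, 0, d. intros k Hk.
destruct k as [|[|[|[|k]]]]; [| | | | lia].
- rewrite p1, p2, p3, p4, p5, Hv0; ring.
- rewrite q1, q2, q3, q4, q5, Hv1; ring.
- rewrite r1, r2, r3, r4, r5, Hv2; ring.
- rewrite s1, s2, s3, s4, s5, Hv3; ring.
Qed.

Lemma Fgh_relation {x y l1 l2 l11 l12 l22 : R} :
  rel24 D x y l1 l2 l11 l12 l22 -> l1 = 0 /\ l2 = 0 /\ l11 = 0 /\ l22 = 0.
Proof.
intros Hrel.
destruct (Fgh_partials x y) as [(p1&p2&p3&p4&p5) [(q1&q2&q3&q4&q5)
  [(r1&r2&r3&r4&r5) (s1&s2&s3&s4&s5)]]].
pose proof (Hrel 0%nat ltac:(lia)) as R0; rewrite p1, p2, p3, p4, p5 in R0.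
pose proof (Hrel 1%nat ltac:(lia)) as R1; rewrite q1, q2, q3, q4, q5 in R1.
pose proof (Hrel 2%nat ltac:(lia)) as R2; rewrite r1, r2, r3, r4, r5 in R2.
pose proof (Hrel 3%nat ltac:(lia)) as R3; rewrite s1, s2, s3, s4, s5 in R3.
destruct (g_free x l1 l11) as [-> ->]; [lra | lra |].
destruct (h_free y l2 l22) as [-> ->]; [lra | lra |].
tauto.
Qed.

(* Hence a nontrivial relation has l12 <> 0: condition (ii) holds with alpha0 = 1. *)
Lemma Fgh_relation_l12 {x y l1 l2 l11 l12 l22 : R} :
  rel24 D x y l1 l2 l11 l12 l22 -> nonzero5 l1 l2 l11 l12 l22 -> l12 <> 0.
Proof.
intros Hrel Hnz E. destruct (Fgh_relation Hrel) as (?&?&?&?).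
apply Hnz; tauto.
Qed.

End FghJet.

Definition Fgh_family (G1 G2 H1 H2 : nat -> R -> R) : nat -> nat -> nat -> R -> R -> R :=
  fun k => match k with
           | 0%nat => x_family G1 | 1%nat => x_family G2
           | 2%nat => y_family H1 | _ => y_family H2 end.

Lemma Fgh_family_spec (G1 G2 H1 H2 : nat -> R -> R) :
  deriv_chain G1 -> deriv_chain G2 -> deriv_chain H1 -> deriv_chain H2 ->
  forall k, (k < 4)%nat ->
    Fgh_family G1 G2 H1 H2 k 0%nat 0%nat = Fgh (G1 0%nat) (G2 0%nat) (H1 0%nat) (H2 0%nat) k
    /\ smooth_family (Fgh_family G1 G2 H1 H2 k).
Proof.
intros HG1 HG2 HH1 HH2 k Hk.
destruct k as [|[|[|[|k]]]]; (split; [reflexivity|]);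
  simpl; apply x_family_smooth || apply y_family_smooth; assumption.
Qed.

Lemma Fgh_in_A24 (g1 g2 h1 h2 : R -> R) :
  smooth1 g1 -> smooth1 g2 -> smooth1 h1 -> smooth1 h2 ->
  free_map g1 g2 -> free_map h1 h2 -> A24 (Fgh g1 g2 h1 h2).
Proof.
intros [G1 [<- HG1]] [G2 [<- HG2]] [H1 [<- HH1]] [H2 [<- HH2]] Fg Fh.
pose proof (free_map_chain _ _ HG1 HG2 Fg) as g_free.
pose proof (free_map_chain _ _ HH1 HH2 Fh) as h_free.
pose proof (Fgh_family_spec _ _ _ _ HG1 HG2 HH1 HH2) as HD.
exists (Fgh_family G1 G2 H1 H2); split; [exact HD | split].
- exact (Fgh_spans HG1 HG2 HH1 HH2 g_free h_free HD).
- left. intros x y l1 l2 l11 l12 l22 Hrel Hnz. right.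
  exact (Fgh_relation_l12 HG1 HG2 HH1 HH2 g_free h_free HD Hrel Hnz).
Qed.

Lemma compat_only_l12 (l12 hx hy dxhx dxhy dyhx dyhy dgxx dgxy dgyy : R) :
  l12 <> 0 ->
  compat 0 0 0 l12 0 hx hy dxhx dxhy dyhx dyhy dgxx dgxy dgyy = 0
  <-> dxhy + dyhx = dgxy.
Proof.
intros Hl12.
assert (Hcollapse : compat 0 0 0 l12 0 hx hy dxhx dxhy dyhx dyhy dgxx dgxy dgyy
                    = (2 * l12) * (dxhy + dyhx - dgxy)) by (unfold compat; ring).
rewrite Hcollapse. split.
- intros H. apply Rmult_integral in H as [H|H]; lra.
- intros H. replace (dxhy + dyhx - dgxy) with 0 by lra. ring.
Qed.

Lemma Fgh_compat (g1 g2 h1 h2 : R -> R) :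
  smooth1 g1 -> smooth1 g2 -> smooth1 h1 -> smooth1 h2 ->
  free_map g1 g2 -> free_map h1 h2 ->
  forall D : nat -> nat -> nat -> R -> R -> R,
    (forall k, (k < 4)%nat -> D k 0%nat 0%nat = Fgh g1 g2 h1 h2 k /\ smooth_family (D k)) ->
  forall l1 l2 l11 l12 l22 : R -> R -> R,
    (forall x y, rel24 D x y (l1 x y) (l2 x y) (l11 x y) (l12 x y) (l22 x y)) ->
    (forall x y, nonzero5 (l1 x y) (l2 x y) (l11 x y) (l12 x y) (l22 x y)) ->
  forall hx hy dxhx dxhy dyhx dyhy dgxx dgxy dgyy : R -> R -> R, forall x y,
    compat (l1 x y) (l2 x y) (l11 x y) (l12 x y) (l22 x y)
           (hx x y) (hy x y) (dxhx x y) (dxhy x y) (dyhx x y) (dyhy x y)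
           (dgxx x y) (dgxy x y) (dgyy x y) = 0
    <-> dxhy x y + dyhx x y = dgxy x y.
Proof.
intros [G1 [<- HG1]] [G2 [<- HG2]] [H1 [<- HH1]] [H2 [<- HH2]] Fg Fh
  D HD l1 l2 l11 l12 l22 Hrel Hnz hx hy dxhx dxhy dyhx dyhy dgxx dgxy dgyy x y.
pose proof (free_map_chain _ _ HG1 HG2 Fg) as g_free.
pose proof (free_map_chain _ _ HH1 HH2 Fh) as h_free.
pose proof (Fgh_relation_l12 HG1 HG2 HH1 HH2 g_free h_free HD (Hrel x y) (Hnz x y))
  as Hl12.
destruct (Fgh_relation HG1 HG2 HH1 HH2 g_free h_free HD (Hrel x y))
  as (-> & -> & -> & ->).
exact (compat_only_l12 _ _ _ _ _ _ _ _ _ _ Hl12).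
Qed.

Lemma smooth1_id : smooth1 (fun x => x).
Proof.
exists (fun n => match n with 0%nat => fun x => x | 1%nat => fun _ => 1 | _ => fun _ => 0 end).
split; [reflexivity|]. intros [|[|n]] x; simpl.
- apply derivable_pt_lim_id.
- apply deriv_const.
- apply deriv_const.
Qed.

Lemma smooth1_exp : smooth1 exp.
Proof. exists (fun _ => exp); split; [reflexivity|]. intros n x; apply derivable_pt_lim_exp. Qed.

(* t |-> (t, e^t) is free: its derivatives (1, e^t) and (0, e^t) are independent. *)
Lemma free_map_id_exp : free_map (fun x => x) exp.
Proof.
intros a c b d Ha Hb Hc Hd t.
assert (Ea : a = fun _ => 1) by exact (is_deriv_unique _ _ _ Ha derivable_pt_lim_id).
subst a.
assert (Eb : b = fun _ => 0) by exact (is_deriv_unique _ _ _ Hb (deriv_const 1)).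
assert (Ec : c = exp) by exact (is_deriv_unique _ _ _ Hc derivable_pt_lim_exp).
subst c.
assert (Ed : d = exp) by exact (is_deriv_unique _ _ _ Hd derivable_pt_lim_exp).
subst b d. intros p q E1 E2. pose proof (exp_pos t).
assert (p = 0) by lra. subst p. split; [reflexivity | nra].
Qed.

Theorem mainTheorem2 :
  (forall g1 g2 h1 h2 : R -> R,
    smooth1 g1 -> smooth1 g2 -> smooth1 h1 -> smooth1 h2 ->
    free_map g1 g2 -> free_map h1 h2 ->
    A24 (Fgh g1 g2 h1 h2) /\
    (forall D : nat -> nat -> nat -> R -> R -> R,
      (forall k, (k < 4)%nat ->
         D k 0%nat 0%nat = Fgh g1 g2 h1 h2 k /\ smooth_family (D k)) ->
      forall l1 l2 l11 l12 l22 : R -> R -> R,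
      smooth2 l1 -> smooth2 l2 -> smooth2 l11 -> smooth2 l12 -> smooth2 l22 ->
      (forall x y, rel24 D x y (l1 x y) (l2 x y) (l11 x y) (l12 x y) (l22 x y)) ->
      (forall x y, nonzero5 (l1 x y) (l2 x y) (l11 x y) (l12 x y) (l22 x y)) ->
      forall hx hy dxhx dxhy dyhx dyhy dgxx dgxy dgyy : R -> R -> R,
      (forall x y,
         derivable_pt_lim (fun t => hx t y) x (dxhx x y) /\
         derivable_pt_lim (fun t => hy t y) x (dxhy x y) /\
         derivable_pt_lim (fun t => hx x t) y (dyhx x y) /\
         derivable_pt_lim (fun t => hy x t) y (dyhy x y)) ->
      forall x y,
        compat (l1 x y) (l2 x y) (l11 x y) (l12 x y) (l22 x y)
               (hx x y) (hy x y) (dxhx x y) (dxhy x y) (dyhx x y) (dyhy x y)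
               (dgxx x y) (dgxy x y) (dgyy x y) = 0
        <-> dxhy x y + dyhx x y = dgxy x y)) /\
  A24 (Fgh (fun x => x) exp (fun y => y) exp).
Proof.
split.
- intros g1 g2 h1 h2 Sg1 Sg2 Sh1 Sh2 Fg Fh. split.
  + exact (Fgh_in_A24 _ _ _ _ Sg1 Sg2 Sh1 Sh2 Fg Fh).
  + intros D HD l1 l2 l11 l12 l22 _ _ _ _ _ Hrel Hnz
      hx hy dxhx dxhy dyhx dyhy dgxx dgxy dgyy _.
    exact (Fgh_compat _ _ _ _ Sg1 Sg2 Sh1 Sh2 Fg Fh D HD _ _ _ _ _ Hrel Hnz
      hx hy dxhx dxhy dyhx dyhy dgxx dgxy dgyy).
- apply Fgh_in_A24;
    first [exact smooth1_id | exact smooth1_exp | exact free_map_id_exp].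
Qed.
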